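(* Let $\{\sigma^{(n)}_{AB}\}_{n\ge1}$ be a sequence of density matrices on a fixed finite-dimensional space $\mathcal H_A\otimes\mathcal H_B$ such that $\lim_{n\to\infty}\sigma^{(n)}_{AB}=\rho_{AB}$ and $\lim_{n\to\infty}\mu(\sigma^{(n)}_{AB})=\lambda$. Then $\mu(\rho_{AB})\leq\lambda$. In particular, if $\lambda=0$ then $\rho_{AB}=\rho_A\otimes\rho_B$ is a product state.
   Context: For a bipartite density matrix $\rho_{AB}$ on $\mathcal H_A\otimes\mathcal H_B$ with reduced states $\rho_A=\mathrm{tr}_B\rho_{AB}$, $\rho_B=\mathrm{tr}_A\rho_{AB}$, the maximal correlation is $\mu(\rho_{AB})=\max |\mathrm{tr}(\rho_{AB}\, X_A\otimes Y_B^\dagger)|$, the maximum over $X_A\in\mathbf L(\mathcal H_A)$, $Y_B\in\mathbf L(\mathcal H_B)$ subject to $\mathrm{tr}(\rho_A X_A)=\mathrm{tr}(\rho_B Y_B)=0$ and $\mathrm{tr}(\rho_A X_AX_A^\dagger)=\mathrm{tr}(\rho_B Y_BY_B^\dagger)=1$. *)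

From HB Require Import structures.
From mathcomp Require Import all_boot all_order all_algebra.
From mathcomp Require Import all_classical all_reals.
From mathcomp Require Import topology normedtype sequences.
From mathcomp Require Import complex mxtens.

Set Implicit Arguments.
Unset Strict Implicit.
Unset Printing Implicit Defensive.

Import Order.TTheory GRing.Theory Num.Theory.
Import numFieldNormedType.Exports.
Local Open Scope classical_set_scope.
Local Open Scope ring_scope.

(* Complex numbers over a real type R are R[i]; the state space is
   H_A (x) H_B = C^dA (x) C^dB = C^(dA*dB), with the Kronecker indexing
   of mxtens (index (a,b) <-> mxtens_index (a,b)). *)

Definition adjmx (R : realType) (m n : nat) (A : 'M[R[i]]_(m, n)) : 'M[R[i]]_(n, m) :=
  map_mx (@conjc R) A^T.

Definition density (R : realType) (d : nat) (rho : 'M[R[i]]_d) : Prop :=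
  [/\ adjmx rho = rho,
      (forall v : 'cV[R[i]]_d, 0 <= (adjmx v *m rho *m v) 0 0)
    & \tr rho = 1].

Definition ptrB (R : realType) (dA dB : nat) (rho : 'M[R[i]]_(dA * dB)) : 'M[R[i]]_dA :=
  \matrix_(a, a') \sum_(b < dB) rho (mxtens_index (a, b)) (mxtens_index (a', b)).

Definition ptrA (R : realType) (dA dB : nat) (rho : 'M[R[i]]_(dA * dB)) : 'M[R[i]]_dB :=
  \matrix_(b, b') \sum_(a < dA) rho (mxtens_index (a, b)) (mxtens_index (a, b')).

(* maximal correlation: the supremum (the maximum, attained by compactness)
   of |tr(rho (X (x) Y^dagger))| over the admissible X, Y *)
Definition maxcorr (R : realType) (dA dB : nat) (rho : 'M[R[i]]_(dA * dB)) : R :=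
  sup [set r : R | exists (X : 'M[R[i]]_dA) (Y : 'M[R[i]]_dB),
         [/\ \tr (ptrB rho *m X) = 0, \tr (ptrA rho *m Y) = 0,
             \tr (ptrB rho *m (X *m adjmx X)) = 1,
             \tr (ptrA rho *m (Y *m adjmx Y)) = 1
           & r = Normc.normc (\tr (rho *m (X *t adjmx Y)))]].

(* convergence of a sequence of complex matrices (entrywise, i.e. in any
   norm on the finite-dimensional space), via real and imaginary parts *)
Definition mx_cvg (R : realType) (m n : nat) (s : nat -> 'M[R[i]]_(m, n))
  (L : 'M[R[i]]_(m, n)) : Prop :=
  forall i j,
    (fun k => complex.Re (s k i j)) @ \oo --> complex.Re (L i j) /\
    (fun k => complex.Im (s k i j)) @ \oo --> complex.Im (L i j).

From HB Require Import structures.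
From mathcomp Require Import all_boot all_order all_algebra.
From mathcomp Require Import all_classical all_reals.
From mathcomp Require Import topology normedtype sequences.
From mathcomp Require Import complex mxtens.
From mathcomp Require Import ring lra.

Set Implicit Arguments.
Unset Strict Implicit.
Unset Printing Implicit Defensive.

Import Order.TTheory GRing.Theory Num.Theory.
Import numFieldNormedType.Exports.
Local Open Scope classical_set_scope.
Local Open Scope ring_scope.

(* The maximal correlation of a state s is the best constant in the covariance inequality
   |Cov_s(X, Y)|^2 <= mu(s)^2 Var_s(X) Var_s(Y): centring and normalising X and Y turns them
   into an admissible pair, and Cauchy-Schwarz for the positive form (P, Q) |-> tr(s P Q^dagger)
   bounds every admissible value by 1, so the supremum is finite. Covariances and
   variances are polynomial in the entries of the state, so the inequality for sigma_n passes to
   the limit with lambda in place of mu(sigma_n), and read back on admissible pairs it gives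
   mu(rho) <= lambda. If lambda = 0 every covariance of rho vanishes, and on matrix units this
   says rho = rho_A (x) rho_B. *)

Section ComplexFacts.
Variable R : realType.
Local Notation C := R[i].
Local Open Scope complex_scope.

Lemma normc_sqr (z : C) : Normc.normc z ^+ 2 = complex.Re z ^+ 2 + complex.Im z ^+ 2.
Proof. by case: z => a b /=; rewrite sqr_sqrtr // addr_ge0 // sqr_ge0. Qed.

Lemma normc_ge0 (z : C) : 0 <= Normc.normc z.
Proof. by case: z => a b; rewrite sqrtr_ge0. Qed.

Lemma normc_realM (k : R) (z : C) : Normc.normc (k%:C * z) = `|k| * Normc.normc z.
Proof. by rewrite Normc.normcM /= expr0n /= addr0 sqrtr_sqr. Qed.

Lemma ge0_complexE (z : C) : 0 <= z -> z = (complex.Re z)%:C /\ 0 <= complex.Re z.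
Proof. by case: z => a b; rewrite lecE /= => /andP[/eqP -> h]. Qed.

Lemma ReM (x y : C) :
  complex.Re (x * y) = complex.Re x * complex.Re y - complex.Im x * complex.Im y.
Proof. by case: x; case: y. Qed.

Lemma ImM (x y : C) :
  complex.Im (x * y) = complex.Re x * complex.Im y + complex.Im x * complex.Re y.
Proof. by case: x => a b; case: y => c e /=; rewrite addrC. Qed.

(* Cauchy-Schwarz for a positive semidefinite Hermitian 2x2 matrix [[p, c], [c^*, q]]. *)
Lemma psd2_cauchy_schwarz (p q c : C) :
  (forall a b : C, 0 <= a * a^* * p + a * b^* * c + b * a^* * c^* + b * b^* * q) ->
  Normc.normc c ^+ 2 <= complex.Re p * complex.Re q.
Proof.
move=> psd; rewrite normc_sqr.
have := psd 1 0; have := psd 0 1.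
case: p psd => p0 p1; case: q => q0 q1; case: c => x y /= psd.
have := psd (q0 +i* 0) (- (x +i* y)); have := psd (- (x -i* y)) (p0 +i* 0).
have := psd 1 (- (x +i* y)); rewrite !lecE /=.
move=> /andP[_ h4] /andP[_ h3] /andP[_ h2] /andP[/eqP e1 h1] /andP[/eqP e0 h0].
have p10 : p1 = 0 by lra.
have q10 : q1 = 0 by lra.
subst p1 q1.
have [q0_gt0|q0_le0] := ltrP 0 q0.
  by rewrite -subr_ge0 -(pmulr_rge0 _ q0_gt0); nra.
have [p0_gt0|p0_le0] := ltrP 0 p0.
  by rewrite -subr_ge0 -(pmulr_rge0 _ p0_gt0); nra.
have p00 : p0 = 0 by lra.
have q00 : q0 = 0 by lra.
subst p0 q0; nra.
Qed.

End ComplexFacts.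

Section TensorProduct.
Variable R : comPzRingType.

Lemma tensmxBl m n p q (A B : 'M[R]_(m, n)) (N : 'M[R]_(p, q)) :
  (A - B) *t N = A *t N - B *t N.
Proof. by apply/matrixP=> i j; rewrite !mxE mulrBl. Qed.

Lemma tensmxBr m n p q (A : 'M[R]_(m, n)) (M N : 'M[R]_(p, q)) :
  A *t (M - N) = A *t M - A *t N.
Proof. by apply/matrixP=> i j; rewrite !mxE mulrBr. Qed.

Lemma tensmxZl m n p q c (A : 'M[R]_(m, n)) (N : 'M[R]_(p, q)) :
  (c *: A) *t N = c *: (A *t N).
Proof. by apply/matrixP=> i j; rewrite !mxE mulrA. Qed.

Lemma tensmxZr m n p q c (A : 'M[R]_(m, n)) (N : 'M[R]_(p, q)) :
  A *t (c *: N) = c *: (A *t N).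
Proof. by apply/matrixP=> i j; rewrite !mxE mulrCA. Qed.

Lemma mxtens_index_eq m n (a a' : 'I_m) (b b' : 'I_n) :
  (mxtens_index (a, b) == mxtens_index (a', b')) = (a == a') && (b == b').
Proof.
apply/eqP/andP => [/(congr1 (@mxtens_unindex m n))|[/eqP-> /eqP->]//].
by rewrite !mxtens_indexK => -[-> ->].
Qed.

Lemma tensmx_delta m n p q (a : 'I_m) (a' : 'I_n) (b : 'I_p) (b' : 'I_q) :
  delta_mx a a' *t delta_mx b b' =
  delta_mx (mxtens_index (a, b)) (mxtens_index (a', b')) :> 'M[R]_(m * p, n * q).
Proof.
apply/matrixP=> i j.
case: (mxtens_indexP i) => x y; case: (mxtens_indexP j) => x' y'.
rewrite tensmxE !mxE !mxtens_index_eq -natrM mulnb.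
by congr (_%:R); rewrite -!andbA; congr (_ && _); rewrite andbCA.
Qed.

Lemma tensmx11 m n : (1%:M : 'M[R]_m) *t (1%:M : 'M[R]_n) = 1%:M.
Proof.
apply/matrixP=> i j.
case: (mxtens_indexP i) => a b; case: (mxtens_indexP j) => a' b'.
by rewrite tensmxE !mxE mxtens_index_eq -natrM mulnb.
Qed.

Lemma sum_mxtens_index (V : nmodType) m n (F : 'I_(m * n) -> V) :
  \sum_(k < m * n) F k = \sum_(a < m) \sum_(b < n) F (mxtens_index (a, b)).
Proof.
rewrite pair_big /=; apply: reindex.
exists (@mxtens_unindex m n) => k _; last by rewrite -surjective_pairing mxtens_unindexK.
by case: k => a b; rewrite mxtens_indexK.
Qed.

Lemma mxtrace_mul_delta n (M : 'M[R]_n) i j : \tr (M *m delta_mx i j) = M j i.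
Proof.
rewrite /mxtrace (bigD1 j) //= big1 => [|k /negPf kj]; last first.
  by rewrite mxE big1 // => l _; rewrite mxE kj andbF mulr0.
rewrite addr0 mxE (bigD1 i) //= big1 => [|l /negPf li]; last by rewrite mxE li mulr0.
by rewrite mxE !eqxx mulr1 addr0.
Qed.

End TensorProduct.

Section Adjoint.
Variable R : realType.
Local Notation C := R[i].

Lemma adjmxE m n (A : 'M[C]_(m, n)) i j : adjmx A i j = (A j i)^*%C.
Proof. by rewrite !mxE. Qed.

Lemma adjmxK m n (A : 'M[C]_(m, n)) : adjmx (adjmx A) = A.
Proof. by apply/matrixP=> i j; rewrite !adjmxE conjcK. Qed.

Lemma adjmxM m n p (A : 'M[C]_(m, n)) (B : 'M[C]_(n, p)) :
  adjmx (A *m B) = adjmx B *m adjmx A.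
Proof.
apply/matrixP=> i j; rewrite adjmxE !mxE rmorph_sum; apply: eq_bigr => k _.
by rewrite !adjmxE rmorphM mulrC.
Qed.

Lemma adjmxD m n (A B : 'M[C]_(m, n)) : adjmx (A + B) = adjmx A + adjmx B.
Proof. by apply/matrixP=> i j; rewrite !mxE rmorphD. Qed.

Lemma adjmxB m n (A B : 'M[C]_(m, n)) : adjmx (A - B) = adjmx A - adjmx B.
Proof. by apply/matrixP=> i j; rewrite !mxE rmorphB. Qed.

Lemma adjmxZ m n c (A : 'M[C]_(m, n)) : adjmx (c *: A) = c^*%C *: adjmx A.
Proof. by apply/matrixP=> i j; rewrite !mxE rmorphM. Qed.

Lemma adjmx1 n : adjmx (1%:M : 'M[C]_n) = 1%:M.
Proof. by apply/matrixP=> i j; rewrite adjmxE !mxE eq_sym rmorph_nat. Qed.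

Lemma adjmx_tens m n p q (A : 'M[C]_(m, n)) (B : 'M[C]_(p, q)) :
  adjmx (A *t B) = adjmx A *t adjmx B.
Proof. by apply/matrixP=> i j; rewrite !mxE rmorphM. Qed.

Lemma mxtrace_adj n (A : 'M[C]_n) : \tr (adjmx A) = (\tr A)^*%C.
Proof. by rewrite /mxtrace rmorph_sum; apply: eq_bigr => i _; rewrite adjmxE. Qed.

End Adjoint.

Section PartialTrace.
Variables (R : realType) (dA dB : nat).
Local Notation C := R[i].
Implicit Type s : 'M[C]_(dA * dB).

Lemma mxtrace_mul_tens s (M : 'M[C]_dA) (N : 'M[C]_dB) :
  \tr (s *m (M *t N)) = \sum_a \sum_b \sum_a' \sum_b'
     s (mxtens_index (a, b)) (mxtens_index (a', b')) * (M a' a * N b' b).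
Proof.
rewrite /mxtrace sum_mxtens_index; apply: eq_bigr => a _; apply: eq_bigr => b _.
rewrite mxE sum_mxtens_index; apply: eq_bigr => a' _; apply: eq_bigr => b' _.
by rewrite tensmxE.
Qed.

Lemma mxtrace_ptrB s (M : 'M[C]_dA) : \tr (ptrB s *m M) = \tr (s *m (M *t 1%:M)).
Proof.
rewrite mxtrace_mul_tens /mxtrace; apply: eq_bigr => a _.
rewrite mxE exchange_big /=; apply: eq_bigr => a' _; rewrite mxE mulr_suml.
apply: eq_bigr => b _; rewrite (bigD1 b) //= big1 => [|b' /negPf nb]; last first.
  by rewrite mxE nb mulr0 mulr0.
by rewrite mxE eqxx mulr1 addr0.
Qed.

Lemma mxtrace_ptrA s (N : 'M[C]_dB) : \tr (ptrA s *m N) = \tr (s *m (1%:M *t N)).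
Proof.
rewrite mxtrace_mul_tens /mxtrace.
transitivity (\sum_a \sum_b \sum_b' s (mxtens_index (a, b)) (mxtens_index (a, b')) * N b' b).
  rewrite exchange_big /=; apply: eq_bigr => b _.
  rewrite mxE exchange_big /=; apply: eq_bigr => b' _.
  by rewrite mxE mulr_suml.
apply: eq_bigr => a _; apply: eq_bigr => b _.
rewrite (bigD1 a) //= [X in _ + X]big1 => [|a' /negPf na]; last first.
  by apply: big1 => b' _; rewrite mxE na mul0r mulr0.
by rewrite addr0; apply: eq_bigr => b' _; rewrite mxE eqxx mul1r.
Qed.

End PartialTrace.

Section SesquilinearForm.
Variables (R : realType) (d : nat) (s : 'M[R[i]]_d).
Local Notation C := R[i].
Implicit Types P Q : 'M[C]_d.

Definition sform P Q := \tr (s *m (P *m adjmx Q)).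

Lemma sformDl P1 P2 Q : sform (P1 + P2) Q = sform P1 Q + sform P2 Q.
Proof. by rewrite /sform mulmxDl mulmxDr mxtraceD. Qed.

Lemma sformBl P1 P2 Q : sform (P1 - P2) Q = sform P1 Q - sform P2 Q.
Proof. by rewrite /sform mulmxBl mulmxBr raddfB. Qed.

Lemma sformZl c P Q : sform (c *: P) Q = c * sform P Q.
Proof. by rewrite /sform -scalemxAl -scalemxAr mxtraceZ. Qed.

Lemma sformDr P Q1 Q2 : sform P (Q1 + Q2) = sform P Q1 + sform P Q2.
Proof. by rewrite /sform adjmxD mulmxDr mulmxDr mxtraceD. Qed.

Lemma sformBr P Q1 Q2 : sform P (Q1 - Q2) = sform P Q1 - sform P Q2.
Proof. by rewrite /sform adjmxB mulmxBr mulmxBr raddfB. Qed.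

Lemma sformZr c P Q : sform P (c *: Q) = c^*%C * sform P Q.
Proof. by rewrite /sform adjmxZ -scalemxAr -scalemxAr mxtraceZ. Qed.

Hypothesis s_herm : adjmx s = s.
Hypothesis s_psd : forall v : 'cV[C]_d, 0 <= (adjmx v *m s *m v) 0 0.

Lemma sformC P Q : sform Q P = (sform P Q)^*%C.
Proof. by rewrite /sform -mxtrace_adj !adjmxM adjmxK s_herm mxtrace_mulC. Qed.

(* tr(s P P^dagger) = tr(P^dagger s P) is the sum of the values of s on the columns of P. *)
Lemma sform_ge0 P : 0 <= sform P P.
Proof.
rewrite /sform mulmxA mxtrace_mulC /mxtrace; apply: sumr_ge0 => j _.
have -> : (adjmx P *m (s *m P)) j j = (adjmx (col j P) *m s *m col j P) 0 0.
  rewrite -mulmxA !mxE; apply: eq_bigr => k _; rewrite !mxE; congr (_ * _).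
  by apply: eq_bigr => l _; rewrite !mxE.
exact: s_psd.
Qed.

Lemma sform_cauchy_schwarz P Q :
  Normc.normc (sform P Q) ^+ 2 <= complex.Re (sform P P) * complex.Re (sform Q Q).
Proof.
apply: psd2_cauchy_schwarz => a b.
have -> : a * a^*%C * sform P P + a * b^*%C * sform P Q
          + b * a^*%C * (sform P Q)^*%C + b * b^*%C * sform Q Q
          = sform (a *: P + b *: Q) (a *: P + b *: Q).
  by rewrite !sformDl !sformDr !sformZl !sformZr -sformC; ring.
exact: sform_ge0.
Qed.

End SesquilinearForm.

Section Moments.
Variables (R : realType) (dA dB : nat).
Local Notation C := R[i].
Local Notation IA := (1%:M : 'M[C]_dA).
Local Notation IB := (1%:M : 'M[C]_dB).
Implicit Types (s : 'M[C]_(dA * dB)) (X Z : 'M[C]_dA) (Y W : 'M[C]_dB).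

Definition meanA s X := \tr (ptrB s *m X).
Definition meanB s Y := \tr (ptrA s *m Y).

Definition covar s X Y := \tr (s *m (X *t adjmx Y)) - meanA s X * meanB s (adjmx Y).
Definition varA s X := meanA s (X *m adjmx X) - meanA s X * meanA s (adjmx X).
Definition varB s Y := meanB s (Y *m adjmx Y) - meanB s Y * meanB s (adjmx Y).

Lemma sform_tensA s X Z : sform s (X *t IB) (Z *t IB) = meanA s (X *m adjmx Z).
Proof. by rewrite /sform adjmx_tens adjmx1 tensmx_mul mulmx1 /meanA mxtrace_ptrB. Qed.

Lemma sform_tensB s Y W : sform s (IA *t Y) (IA *t W) = meanB s (Y *m adjmx W).
Proof. by rewrite /sform adjmx_tens adjmx1 tensmx_mul mulmx1 /meanB mxtrace_ptrA. Qed.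

Lemma sform_tensAB s X W : sform s (X *t IB) (IA *t W) = \tr (s *m (X *t adjmx W)).
Proof. by rewrite /sform adjmx_tens adjmx1 tensmx_mul mulmx1 mul1mx. Qed.

Lemma sform_tensA1 s X : sform s (X *t IB) 1%:M = meanA s X.
Proof. by rewrite /sform adjmx1 mulmx1 /meanA mxtrace_ptrB. Qed.

Lemma sform_tensB1 s Y : sform s (IA *t Y) 1%:M = meanB s Y.
Proof. by rewrite /sform adjmx1 mulmx1 /meanB mxtrace_ptrA. Qed.

Lemma sform_1tensA s Z : sform s 1%:M (Z *t IB) = meanA s (adjmx Z).
Proof. by rewrite /sform adjmx_tens adjmx1 mul1mx /meanA mxtrace_ptrB. Qed.

Lemma sform_1tensB s W : sform s 1%:M (IA *t W) = meanB s (adjmx W).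
Proof. by rewrite /sform adjmx_tens adjmx1 mul1mx /meanB mxtrace_ptrA. Qed.

Lemma sform11 s : sform s 1%:M 1%:M = \tr s.
Proof. by rewrite /sform adjmx1 !mulmx1. Qed.

Lemma tensmx_subAr X a : (X - a%:M) *t IB = X *t IB - a *: 1%:M.
Proof. by rewrite tensmxBl -[a%:M]scalemx1 tensmxZl tensmx11. Qed.

Lemma tensmx_subBr Y b : IA *t (Y - b%:M) = IA *t Y - b *: 1%:M.
Proof. by rewrite tensmxBr -[b%:M]scalemx1 tensmxZr tensmx11. Qed.

Lemma sform_sub s P1 P0 Q1 Q0 a b :
  sform s (P1 - a *: P0) (Q1 - b *: Q0) =
  sform s P1 Q1 - b^*%C * sform s P1 Q0 - a * sform s P0 Q1 + a * b^*%C * sform s P0 Q0.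
Proof. by rewrite !sformBl !sformBr !sformZl !sformZr; ring. Qed.

Section Centering.
Variable s : 'M[C]_(dA * dB).
Hypothesis tr_s : \tr s = 1.

Lemma meanA_center X : meanA s (X - (meanA s X)%:M) = 0.
Proof.
by rewrite -sform_tensA1 tensmx_subAr sformBl sformZl sform_tensA1 sform11 tr_s mulr1 subrr.
Qed.

Lemma meanB_center Y : meanB s (Y - (meanB s Y)%:M) = 0.
Proof.
by rewrite -sform_tensB1 tensmx_subBr sformBl sformZl sform_tensB1 sform11 tr_s mulr1 subrr.
Qed.

Lemma covar_center X Y : covar s X Y =
  \tr (s *m ((X - (meanA s X)%:M) *t adjmx (Y - (meanB s Y)%:M))).
Proof.
rewrite -sform_tensAB tensmx_subAr tensmx_subBr sform_sub.
by rewrite sform_tensAB sform_tensA1 sform_1tensB sform11 tr_s /covar; ring.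
Qed.

Lemma varA_center X : varA s X =
  meanA s ((X - (meanA s X)%:M) *m adjmx (X - (meanA s X)%:M)).
Proof.
rewrite -sform_tensA tensmx_subAr sform_sub.
by rewrite sform_tensA sform_tensA1 sform_1tensA sform11 tr_s /varA; ring.
Qed.

Lemma varB_center Y : varB s Y =
  meanB s ((Y - (meanB s Y)%:M) *m adjmx (Y - (meanB s Y)%:M)).
Proof.
rewrite -sform_tensB tensmx_subBr sform_sub.
by rewrite sform_tensB sform_tensB1 sform_1tensB sform11 tr_s /varB; ring.
Qed.

End Centering.

(* Testing the covariance on matrix units reads off every entry of s. *)
Lemma covar0_tens_ptr s : (forall X Y, covar s X Y = 0) -> s = ptrB s *t ptrA s.
Proof.
move=> covar0; apply/matrixP=> i j.
case: (mxtens_indexP i) => a b; case: (mxtens_indexP j) => a' b'.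
have := covar0 (delta_mx a' a) (adjmx (delta_mx b' b)).
rewrite /covar adjmxK tensmx_delta /meanA /meanB !mxtrace_mul_delta tensmxE.
by move/eqP; rewrite subr_eq0 => /eqP.
Qed.

End Moments.

Section MaximalCorrelation.
Variables (R : realType) (dA dB : nat) (s : 'M[R[i]]_(dA * dB)).
Local Notation C := R[i].
Local Open Scope complex_scope.
Implicit Types (X : 'M[C]_dA) (Y : 'M[C]_dB).
Hypothesis s_density : density s.

Definition corr_set := [set r : R | exists (X : 'M[C]_dA) (Y : 'M[C]_dB),
  [/\ \tr (ptrB s *m X) = 0, \tr (ptrA s *m Y) = 0,
      \tr (ptrB s *m (X *m adjmx X)) = 1, \tr (ptrA s *m (Y *m adjmx Y)) = 1
    & r = Normc.normc (\tr (s *m (X *t adjmx Y)))]].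

Lemma maxcorrE : maxcorr s = sup corr_set.
Proof. by []. Qed.

Lemma meanA_sqr_ge0 X : 0 <= meanA s (X *m adjmx X).
Proof. by have [_ s_psd _] := s_density; rewrite -sform_tensA sform_ge0. Qed.

Lemma meanB_sqr_ge0 Y : 0 <= meanB s (Y *m adjmx Y).
Proof. by have [_ s_psd _] := s_density; rewrite -sform_tensB sform_ge0. Qed.

Lemma normc_corr_le X Y : Normc.normc (\tr (s *m (X *t adjmx Y))) ^+ 2 <=
  complex.Re (meanA s (X *m adjmx X)) * complex.Re (meanB s (Y *m adjmx Y)).
Proof.
have [s_herm s_psd _] := s_density.
by rewrite -sform_tensAB -sform_tensA -sform_tensB sform_cauchy_schwarz.
Qed.

Lemma corr_set_ub : ubound corr_set 1.
Proof.
move=> r [X [Y [_ _ hX hY ->]]].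
have := normc_corr_le X Y; rewrite /meanA /meanB hX hY /= mulr1.
by have := normc_ge0 (\tr (s *m (X *t adjmx Y))); nra.
Qed.

Lemma le_maxcorr r : corr_set r -> r <= maxcorr s.
Proof.
by move=> hr; apply: sup_upper_bound => //; split; [exists r | exists 1; exact: corr_set_ub].
Qed.

Lemma maxcorr_set0 : corr_set = set0 -> maxcorr s = 0.
Proof. by rewrite maxcorrE => ->; rewrite sup0. Qed.

Lemma maxcorr_ge0 : 0 <= maxcorr s.
Proof.
have [/maxcorr_set0 -> //|/set0P[r hr]] := eqVneq corr_set set0.
apply: le_trans (le_maxcorr hr).
by case: hr => X [Y [_ _ _ _ ->]]; exact: normc_ge0.
Qed.

Lemma maxcorr_le (lam : R) : 0 <= lam ->
  (forall X Y, Normc.normc (covar s X Y) ^+ 2 <=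
     lam ^+ 2 * complex.Re (varA s X) * complex.Re (varB s Y)) ->
  maxcorr s <= lam.
Proof.
move=> lam_ge0 bound.
have [/maxcorr_set0 -> //|/set0P ne] := eqVneq corr_set set0.
apply: ge_sup => // r [X [Y [X0 Y0 XX YY ->]]].
have := bound X Y; rewrite /covar /varA /varB /meanA /meanB X0 Y0 XX YY.
rewrite !mul0r !subr0 /= !mulr1.
by have := normc_ge0 (\tr (s *m (X *t adjmx Y))); nra.
Qed.

Lemma corr_set_normalize X Y (a b : R) :
  meanA s X = 0 -> meanB s Y = 0 -> 0 < a -> 0 < b ->
  meanA s (X *m adjmx X) = (a ^+ 2)%:C -> meanB s (Y *m adjmx Y) = (b ^+ 2)%:C ->
  corr_set (Normc.normc (\tr (s *m (X *t adjmx Y))) / (a * b)).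
Proof.
move=> X0 Y0 a_gt0 b_gt0 XX YY.
have [s_herm s_psd _] := s_density.
exists ((a^-1)%:C *: X), ((b^-1)%:C *: Y); split.
- by rewrite -/(meanA _ _) -sform_tensA1 tensmxZl sformZl sform_tensA1 X0 mulr0.
- by rewrite -/(meanB _ _) -sform_tensB1 tensmxZr sformZl sform_tensB1 Y0 mulr0.
- rewrite -/(meanA _ _) -sform_tensA tensmxZl sformZl sformZr conjc_real sform_tensA XX.
  by rewrite -!rmorphM /= mulrA -expr2 -exprMn mulVf ?gt_eqF // expr1n.
- rewrite -/(meanB _ _) -sform_tensB tensmxZr sformZl sformZr conjc_real sform_tensB YY.
  by rewrite -!rmorphM /= mulrA -expr2 -exprMn mulVf ?gt_eqF // expr1n.
rewrite -!sform_tensAB tensmxZl tensmxZr sformZl sformZr conjc_real sform_tensAB.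
rewrite mulrA -rmorphM normc_realM ger0_norm ?mulr_ge0 ?invr_ge0 ?ltW //.
by rewrite mulrC invfM.
Qed.

Lemma centered_corr_bound X Y : meanA s X = 0 -> meanB s Y = 0 ->
  Normc.normc (\tr (s *m (X *t adjmx Y))) ^+ 2 <=
  maxcorr s ^+ 2 * complex.Re (meanA s (X *m adjmx X)) * complex.Re (meanB s (Y *m adjmx Y)).
Proof.
move=> X0 Y0; have CS := normc_corr_le X Y.
have [XX p_ge0] := ge0_complexE (meanA_sqr_ge0 X).
have [YY q_ge0] := ge0_complexE (meanB_sqr_ge0 Y).
move: XX YY p_ge0 q_ge0 CS.
set p := complex.Re (meanA s _); set q := complex.Re (meanB s _) => XX YY p_ge0 q_ge0 CS.
have [p_gt0|p_le0] := ltrP 0 p; last first.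
  have p0 : p = 0 by apply/eqP; rewrite eq_le p_le0 p_ge0.
  by rewrite p0 !(mulr0, mul0r) in CS *.
have [q_gt0|q_le0] := ltrP 0 q; last first.
  have q0 : q = 0 by apply/eqP; rewrite eq_le q_le0 q_ge0.
  by rewrite q0 !(mulr0, mul0r) in CS *.
have a_gt0 : 0 < Num.sqrt p by rewrite sqrtr_gt0.
have b_gt0 : 0 < Num.sqrt q by rewrite sqrtr_gt0.
have a2 : Num.sqrt p ^+ 2 = p by rewrite sqr_sqrtr ?ltW.
have b2 : Num.sqrt q ^+ 2 = q by rewrite sqr_sqrtr ?ltW.
have := le_maxcorr (corr_set_normalize X0 Y0 a_gt0 b_gt0 _ _).
rewrite a2 b2 => /(_ XX YY); rewrite ler_pdivrMr ?mulr_gt0 // => n_le.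
have := normc_ge0 (\tr (s *m (X *t adjmx Y))); rewrite -a2 -b2; nra.
Qed.

Lemma covar_bound X Y : Normc.normc (covar s X Y) ^+ 2 <=
  maxcorr s ^+ 2 * complex.Re (varA s X) * complex.Re (varB s Y).
Proof.
have [_ _ tr_s] := s_density.
rewrite covar_center // varA_center // varB_center //.
by apply: centered_corr_bound; [exact: meanA_center | exact: meanB_center].
Qed.

End MaximalCorrelation.

Section ComplexConvergence.
Variable R : realType.
Local Notation C := R[i].

Definition ccvg (u : nat -> C) (l : C) :=
  (fun n => complex.Re (u n)) @ \oo --> complex.Re l /\
  (fun n => complex.Im (u n)) @ \oo --> complex.Im l.

Lemma eq_ccvg u v l : u =1 v -> ccvg u l -> ccvg v l.
Proof. by move=> /funext ->. Qed.

Lemma ccvg_cst (c : C) : ccvg (fun=> c) c.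
Proof. by split; apply: cvg_cst. Qed.

Lemma ccvgD u v a b : ccvg u a -> ccvg v b -> ccvg (fun n => u n + v n) (a + b).
Proof.
move=> [uRe uIm] [vRe vIm]; split; rewrite raddfD.
  by under eq_cvg do rewrite raddfD; exact: cvgD.
by under eq_cvg do rewrite raddfD; exact: cvgD.
Qed.

Lemma ccvgB u v a b : ccvg u a -> ccvg v b -> ccvg (fun n => u n - v n) (a - b).
Proof.
move=> [uRe uIm] [vRe vIm]; split; rewrite raddfB.
  by under eq_cvg do rewrite raddfB; exact: cvgB.
by under eq_cvg do rewrite raddfB; exact: cvgB.
Qed.

Lemma ccvgM u v a b : ccvg u a -> ccvg v b -> ccvg (fun n => u n * v n) (a * b).
Proof.
move=> [uRe uIm] [vRe vIm]; split.
  by rewrite ReM; under eq_cvg do rewrite ReM; apply: cvgB; apply: cvgM.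
by rewrite ImM; under eq_cvg do rewrite ImM; apply: cvgD; apply: cvgM.
Qed.

Lemma ccvg_sum (I : Type) (r : seq I) (F : I -> nat -> C) (L : I -> C) :
  (forall i, ccvg (F i) (L i)) ->
  ccvg (fun n => \sum_(i <- r) F i n) (\sum_(i <- r) L i).
Proof.
move=> FL; elim: r => [|j r IHr].
  by rewrite big_nil; apply: eq_ccvg (ccvg_cst 0) => n; rewrite big_nil.
by rewrite big_cons; apply: eq_ccvg (ccvgD (FL j) IHr) => n; rewrite big_cons.
Qed.

End ComplexConvergence.

Section Limit.
Variables (R : realType) (dA dB : nat).
Variables (sigma : nat -> 'M[R[i]]_(dA * dB)) (rho : 'M[R[i]]_(dA * dB)).
Local Notation C := R[i].
Implicit Types (X : 'M[C]_dA) (Y : 'M[C]_dB).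
Hypothesis sigma_rho : mx_cvg sigma rho.

Lemma ccvg_mxtrace_mul (K : 'M[C]_(dA * dB)) :
  ccvg (fun n => \tr (sigma n *m K)) (\tr (rho *m K)).
Proof.
have trE (s : 'M[C]_(dA * dB)) : \tr (s *m K) = \sum_i \sum_j s i j * K j i.
  by apply: eq_bigr => i _; rewrite mxE.
rewrite trE; apply: eq_ccvg (fun n => esym (trE (sigma n))) _.
by apply: ccvg_sum => i; apply: ccvg_sum => j; apply: ccvgM (ccvg_cst _).
Qed.

Lemma ccvg_meanA X : ccvg (fun n => meanA (sigma n) X) (meanA rho X).
Proof.
rewrite /meanA mxtrace_ptrB.
by apply: eq_ccvg (ccvg_mxtrace_mul _) => n; rewrite mxtrace_ptrB.
Qed.

Lemma ccvg_meanB Y : ccvg (fun n => meanB (sigma n) Y) (meanB rho Y).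
Proof.
rewrite /meanB mxtrace_ptrA.
by apply: eq_ccvg (ccvg_mxtrace_mul _) => n; rewrite mxtrace_ptrA.
Qed.

Lemma ccvg_covar X Y : ccvg (fun n => covar (sigma n) X Y) (covar rho X Y).
Proof. exact: ccvgB (ccvg_mxtrace_mul _) (ccvgM (ccvg_meanA _) (ccvg_meanB _)). Qed.

Lemma ccvg_varA X : ccvg (fun n => varA (sigma n) X) (varA rho X).
Proof. exact: ccvgB (ccvg_meanA _) (ccvgM (ccvg_meanA _) (ccvg_meanA _)). Qed.

Lemma ccvg_varB Y : ccvg (fun n => varB (sigma n) Y) (varB rho Y).
Proof. exact: ccvgB (ccvg_meanB _) (ccvgM (ccvg_meanB _) (ccvg_meanB _)). Qed.

Variable lambda : R.
Hypothesis sigma_density : forall n, density (sigma n).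
Hypothesis maxcorr_lambda : (fun n => maxcorr (sigma n)) @ \oo --> lambda.

Lemma maxcorr_lim_ge0 : 0 <= lambda.
Proof.
apply: (ler_cvg_to (cvg_cst 0) maxcorr_lambda); apply: nearW => n.
exact: maxcorr_ge0 (sigma_density n).
Qed.

Lemma covar_bound_lim X Y : Normc.normc (covar rho X Y) ^+ 2 <=
  lambda ^+ 2 * complex.Re (varA rho X) * complex.Re (varB rho Y).
Proof.
have [covRe covIm] := ccvg_covar X Y.
have [varARe _] := ccvg_varA X; have [varBRe _] := ccvg_varB Y.
rewrite normc_sqr !expr2.
apply: (ler_cvg_to (cvgD (cvgM covRe covRe) (cvgM covIm covIm))
                   (cvgM (cvgM (cvgM maxcorr_lambda maxcorr_lambda) varARe) varBRe)).
apply: nearW => n; have := covar_bound (sigma_density n) X Y.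
by rewrite normc_sqr !expr2; exact.
Qed.

End Limit.

Unset Implicit Arguments.

Theorem lemma2 (R : realType) (dA dB : nat)
  (sigma : nat -> 'M[R[i]]_(dA * dB)) (rho : 'M[R[i]]_(dA * dB)) (lambda : R) :
  (forall n, density (sigma n)) ->
  mx_cvg sigma rho ->
  (fun n => maxcorr (sigma n)) @ \oo --> lambda ->
  maxcorr rho <= lambda /\
  (lambda = 0 -> rho = ptrB rho *t ptrA rho).
Proof.
move=> sigma_density sigma_rho maxcorr_lambda.
have bound := covar_bound_lim sigma_rho sigma_density maxcorr_lambda.
split; first exact: maxcorr_le (maxcorr_lim_ge0 sigma_density maxcorr_lambda) bound.
move=> lambda0; apply: covar0_tens_ptr => X Y; apply: Normc.eq0_normc.
apply/eqP; rewrite -sqrf_eq0 eq_le sqr_ge0 andbT.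
by have := bound X Y; rewrite lambda0 expr0n !mul0r.
Qed.
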